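(* Let $A$ be a real symmetric $n\times n$ matrix and $Z=\{{\bf z}_1,\dots,{\bf z}_s\}\subset\mathbb{R}^n$. Then the extended walk matrix $\widetilde W(A,Z)$ has rank $n$ if and only if the real linear span of $P(A,Z)$ equals $\mathbb{R}^{n\times n}$.
   Context: The extended walk matrix is the $n\times (ns)$ matrix $\widetilde W(A,Z):=[{\bf z}_1, A{\bf z}_1,\dots,A^{n-1}{\bf z}_1,\dots,{\bf z}_s, A{\bf z}_s,\dots,A^{n-1}{\bf z}_s]$. The set $P(A,Z):=\{A^m{\bf z}_k{\bf z}_j^TA^\ell : 1\le k,j\le s,\ 0\le m,\ell\le n-1\}$. *)

From HB Require Import structures.
From mathcomp Require Import all_boot all_order all_algebra.
Set Implicit Arguments. Unset Strict Implicit. Unset Printing Implicit Defensive.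
Import Order.TTheory GRing.Theory Num.Theory.
Local Open Scope ring_scope.

(* Extended walk matrix  W~(A,Z) = [z_1, A z_1, ..., A^(n-1) z_1, ..., z_s, ..., A^(n-1) z_s],
   an n x (s*n) matrix.  Column (k, m) (k < s, m < n) sits at index k * n + m
   (= mxvec_index k m), i.e. exactly the ordering of the paper. *)
Definition ext_walk (R : pzRingType) (n s : nat) (A : 'M[R]_n) (Z : 'I_s -> 'cV[R]_n)
  : 'M[R]_(n, s * n) :=
  \matrix_(r < n) mxvec (\matrix_(k < s, m < n) (A ^+ m *m Z k) r 0).

Definition walk_products (R : pzRingType) (n s : nat) (A : 'M[R]_n) (Z : 'I_s -> 'cV[R]_n)
  : seq 'M[R]_n :=
  [seq A ^+ kjml.2.1 *m Z kjml.1.1 *m (Z kjml.1.2)^T *m A ^+ kjml.2.2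
    | kjml : 'I_s * 'I_s * ('I_n * 'I_n) <- enum [set: 'I_s * 'I_s * ('I_n * 'I_n)]].

From HB Require Import structures.
From mathcomp Require Import all_boot all_order all_algebra.
Set Implicit Arguments. Unset Strict Implicit. Unset Printing Implicit Defensive.
Import Order.TTheory GRing.Theory Num.Theory.
Local Open Scope ring_scope.

(* For symmetric A the products A^m z_k z_j^T A^l are exactly the outer products
   w w'^T of two columns of W := W~(A,Z), so the claim is an instance of a fact about
   an arbitrary n x p matrix W over a field: the outer products of its columns span
   all n x n matrices iff W has rank n.  If W has a right inverse B, then every M equals
   W (B M B^T) W^T, a combination of outer products of columns.  Conversely the left
   kernel of W annihilates every outer product of columns, hence their span; if that
   span contains the identity, the left kernel is zero. *)

Definition col_products (R : pzRingType) (n p : nat) (W : 'M[R]_(n, p)) : seq 'M[R]_n :=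
  [seq col cd.1 W *m (col cd.2 W)^T | cd : 'I_p * 'I_p].

Lemma trmxX_sym (R : comPzRingType) (n : nat) (A : 'M[R]_n) (l : nat) :
  A^T = A -> (A ^+ l)^T = A ^+ l.
Proof.
move=> symA; elim: l => [|l IHl]; first by rewrite !expr0 trmx1.
by rewrite exprS -mulmxE trmx_mul IHl symA mulmxE -exprSr exprS.
Qed.

Lemma col_ext_walk (R : comPzRingType) (n s : nat) (A : 'M[R]_n) (Z : 'I_s -> 'cV[R]_n)
    (k : 'I_s) (m : 'I_n) :
  col (mxvec_index k m) (ext_walk A Z) = A ^+ m *m Z k.
Proof. by apply/matrixP => r i; rewrite (ord1 i) !mxE mxvecE !mxE. Qed.

Lemma walk_products_col_products (R : comPzRingType) (n s : nat) (A : 'M[R]_n)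
    (Z : 'I_s -> 'cV[R]_n) :
  A^T = A -> walk_products A Z =i col_products (ext_walk A Z).
Proof.
move=> symA; have outerE (k j : 'I_s) (m l : 'I_n) :
    A ^+ m *m Z k *m (Z j)^T *m A ^+ l =
    col (mxvec_index k m) (ext_walk A Z) *m (col (mxvec_index j l) (ext_walk A Z))^T.
  by rewrite !col_ext_walk trmx_mul trmxX_sym // !mulmxA.
move=> M; apply/mapP/imageP => [[[[k j] [m l]] _ ->] | [[c d] _ ->]].
  by exists (mxvec_index k m, mxvec_index j l); rewrite ?outerE.
case: (mxvec_indexP c) => k m; case: (mxvec_indexP d) => j l.
by exists (k, j, (m, l)); rewrite ?mem_enum ?inE ?outerE.
Qed.

Lemma mulmx_delta_trmx (R : comPzRingType) (n p : nat) (W : 'M[R]_(n, p)) (c d : 'I_p) :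
  W *m delta_mx c d *m W^T = col c W *m (col d W)^T.
Proof.
rewrite -(mul_delta_mx (0 : 'I_1)) !mulmxA -colE -mulmxA.
by rewrite -trmx_delta -trmx_mul -colE.
Qed.

Lemma mulmx_trmx_col_products (R : comPzRingType) (n p : nat) (W : 'M[R]_(n, p))
    (X : 'M[R]_p) :
  W *m X *m W^T = \sum_c \sum_d X c d *: (col c W *m (col d W)^T).
Proof.
rewrite {1}(matrix_sum_delta X) mulmx_sumr mulmx_suml; apply: eq_bigr => c _.
rewrite mulmx_sumr mulmx_suml; apply: eq_bigr => d _.
by rewrite -scalemxAr -scalemxAl mulmx_delta_trmx.
Qed.

Lemma span_col_products_full (F : fieldType) (n p : nat) (W : 'M[F]_(n, p)) :
  (<<col_products W>>%VS = fullv) <-> row_free W.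
Proof.
split=> [spanW | /row_freeP[B WB]].
- rewrite -kermx_eq0; apply/eqP; set K := kermx W.
  have KW : K *m W = 0 by exact: mulmx_ker.
  have span_ker : (<<col_products W>> <= lker (linfun (mulmx K)))%VS.
    apply/span_subvP => _ /imageP[[c d] _ ->].
    by rewrite memv_ker lfunE /= mulmxA colE mulmxA KW !mul0mx.
  have : (1%:M : 'M_n) \in lker (linfun (mulmx K)).
    by apply: (subvP span_ker); rewrite spanW memvf.
  by rewrite memv_ker lfunE /= mulmx1 => /eqP.
- apply/eqP; rewrite eqEsubv subvf; apply/subvP => M _.
  have -> : M = W *m (B *m M *m B^T) *m W^T.
    by rewrite !mulmxA WB mul1mx -mulmxA -trmx_mul WB trmx1 mulmx1.
  rewrite mulmx_trmx_col_products; apply: memv_suml => c _; apply: memv_suml => d _.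
  by apply/memvZ/memv_span/imageP; exists (c, d).
Qed.

Theorem lemma3p4 (R : realFieldType) (n s : nat) (A : 'M[R]_n)
    (Z : 'I_s -> 'cV[R]_n) (symA : A^T = A) :
  (\rank (ext_walk A Z) = n)%N <-> (<<walk_products A Z>>%VS = fullv).
Proof.
rewrite (eq_span (walk_products_col_products Z symA)).
exact: iff_trans (rwP eqP) (iff_sym (span_col_products_full _)).
Qed.
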